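(* Let $C_n$ be the cycle on $n\ge 3$ vertices. (1) If $n$ is odd, then $\mathcal{Z}^{\mathrm{TE}}_-(C_n)\cong K_n$ and $\mathcal{Z}^{\mathrm{TS}}_-(C_n)\cong C_n$. (2) If $n$ is even, then $\mathcal{Z}^{\mathrm{TE}}_-(C_n)\cong K_{n/2}\,\square\,K_{n/2}$ and $\mathcal{Z}^{\mathrm{TS}}_-(C_n)\cong \frac{n^2}{4}K_1$ (the edgeless graph on $n^2/4$ vertices).
   Context: $\square$ denotes the Cartesian product. Skew forcing: vertices are colored blue or white; if any vertex $u$ (blue or white) has exactly one white neighbor $v$, then $u$ may force $v$ to become blue. A skew forcing set is a (possibly empty) set of initially blue vertices from which repeated application of this rule turns every vertex blue; $\mathrm{Z}_-(G)$ is the minimum size of a skew forcing set. $\mathcal{Z}^{\mathrm{TE}}_-(G)$ has as vertices the minimum skew forcing sets of $G$, with $S_1S_2$ an edge iff $S_1\setminus S_2=\{v_1\}$ and $S_2\setminus S_1=\{v_2\}$ for some vertices $v_1,v_2$; $\mathcal{Z}^{\mathrm{TS}}_-(G)$ has the same vertices with the additional requirement $v_1v_2\in E(G)$. *)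

From mathcomp Require Import all_boot.
Set Implicit Arguments. Unset Strict Implicit. Unset Printing Implicit Defensive.

(* A simple graph: a finite vertex type V with a symmetric irreflexive
   adjacency relation e : rel V. *)

Section Skew.
Variables (V : finType) (e : rel V).

Definition skew_step (B B' : {set V}) : bool :=
  [exists u : V, exists v : V,
     ([set w | e u w & w \notin B] == [set v]) && (B' == v |: B)].

Definition skew_forcing (S : {set V}) : bool := connect skew_step S [set: V].

Definition min_skew_forcing (S : {set V}) : bool :=
  skew_forcing S && [forall T : {set V}, skew_forcing T ==> (#|S| <= #|T|)].

Definition MSF := {S : {set V} | min_skew_forcing S}.

Definition ZTE : rel MSF := fun S1 S2 =>
  [exists v1 : V, exists v2 : V,
     (val S1 :\: val S2 == [set v1]) && (val S2 :\: val S1 == [set v2])].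

Definition ZTS : rel MSF := fun S1 S2 =>
  [exists v1 : V, exists v2 : V,
     [&& val S1 :\: val S2 == [set v1], val S2 :\: val S1 == [set v2] & e v1 v2]].
End Skew.

Definition isomorphic (V1 V2 : finType) (e1 : rel V1) (e2 : rel V2) : Prop :=
  exists f : V1 -> V2, bijective f /\ forall x y, e1 x y = e2 (f x) (f y).

(* The cycle C_n on vertices 0..n-1 (simple for n >= 3). *)
Definition cycle_rel (n : nat) : rel 'I_n := fun i j =>
  (j == (i.+1 %% n) :> nat) || (i == (j.+1 %% n) :> nat).

Definition complete_rel (n : nat) : rel 'I_n := fun i j => i != j.

Definition cart_rel (V1 V2 : finType) (e1 : rel V1) (e2 : rel V2)
  : rel (V1 * V2)%type := fun x y =>
  ((x.1 == y.1) && e2 x.2 y.2) || ((x.2 == y.2) && e1 x.1 y.1).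

Definition edgeless_rel (m : nat) : rel 'I_m := fun _ _ => false.
Arguments cycle_rel n : clear implicits.
Arguments complete_rel n : clear implicits.
Arguments edgeless_rel m : clear implicits.
Arguments ZTE {V} e.
Arguments ZTS {V} e.
Arguments MSF {V} e.

From mathcomp Require Import all_boot zify.

(* On C_n a vertex can force only when one of its two neighbours is already
   blue, so every forcing step colours a vertex at distance two from a blue
   one, and conversely every vertex at distance two from a blue vertex can be
   forced.  Colour thus spreads exactly along the orbits of i |-> i + 2: for
   odd n there is a single orbit and the minimum skew forcing sets are the
   singletons, while for even n both parity classes are invariant and the
   minimum skew forcing sets are the pairs {2i, 2j+1}.  Two such sets are
   TE-adjacent iff they differ in one token, which gives K_n and
   K_{n/2} □ K_{n/2}.  For odd n, TS-adjacency of {i} and {j} is adjacency of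
   i and j; for even n the exchanged tokens have equal parity, so they are
   never adjacent in C_n. *)

Set Implicit Arguments.
Unset Strict Implicit.
Unset Printing Implicit Defensive.

Lemma connect_invariant (T : finType) (r : rel T) (P : pred T) x y :
  (forall a b, P a -> r a b -> P b) -> connect r x y -> P x -> P y.
Proof.
move=> Pr /connectP [p]; elim: p x => [_ _ -> //|z p IHp] x /= /andP [rxz pz] ly Px.
exact: IHp pz ly (Pr _ _ Px rxz).
Qed.

Lemma set1D (T : finType) (z : T) (C : {set T}) :
  [set z] :\: C = if z \in C then set0 else [set z].
Proof.
apply/setP=> w; case: (boolP (z \in C)) => zC; rewrite !inE;
  by case: eqP => [->|]; rewrite ?zC ?andbF.
Qed.

Lemma card_set2D (T : finType) (x y : T) (C : {set T}) :
  x != y -> #|[set x; y] :\: C| = (x \notin C) + (y \notin C).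
Proof.
move=> xy; rewrite setDUl !set1D.
by case: (x \in C); case: (y \in C); rewrite ?set0U ?setU0 ?cards0 ?cards1 ?cards2 ?xy.
Qed.

Lemma inj_onto_bij (T T' : finType) (f : T -> T') :
  injective f -> (forall y, y \in codom f) -> bijective f.
Proof.
by move=> f_inj f_onto; exists (fun y => iinv (f_onto y)) => y; rewrite ?iinv_f ?f_iinv.
Qed.

Lemma isomorphic_of_bij (V1 V2 : finType) (e1 : rel V1) (e2 : rel V2) (g : V2 -> V1) :
  bijective g -> {mono g : x y / e2 x y >-> e1 x y} -> isomorphic e1 e2.
Proof.
case=> f gK fK g_mono; exists f; split; first exact: (Bijective fK gK).
by move=> x y; rewrite -g_mono !fK.
Qed.

Lemma isomorphic_edgeless (V : finType) (e : rel V) (m : nat) :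
  (forall x y, e x y = false) -> #|V| = m -> isomorphic e (edgeless_rel m).
Proof.
move=> e0 card_V; exists (fun x => cast_ord card_V (enum_rank x)); split=> //.
apply: bij_comp; [exact: (Bijective (cast_ordK _) (cast_ordKV _)) | exact: enum_rank_bij].
Qed.

Lemma exists_setD_set1 (T : finType) (A B : {set T}) :
  [exists v1, exists v2, (A :\: B == [set v1]) && (B :\: A == [set v2])] =
  (#|A :\: B| == 1) && (#|B :\: A| == 1).
Proof.
apply/existsP/andP => [[v1 /existsP [v2 /andP [/eqP -> /eqP ->]]]|].
  by rewrite !cards1.
case=> /cards1P [v1 ->] /cards1P [v2 ->].
by exists v1; apply/existsP; exists v2; rewrite !eqxx.
Qed.

Section SkewForcing.
Variables (V : finType) (e : rel V).

Lemma skew_step_subset B B' : skew_step e B B' -> B \subset B'.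
Proof. by case/existsP=> u /existsP [v /andP [_ /eqP ->]]; apply: subsetUr. Qed.

Lemma skew_step_stable S :
  exists2 B, connect (skew_step e) S B & forall B', skew_step e B B' -> B' = B.
Proof.
case: (@arg_maxnP _ S (connect (skew_step e) S) (fun B => #|B|) (connect0 _ S)).
move=> B SB B_max; exists B => // B' BB'; apply/eqP; rewrite eq_sym eqEcard.
by rewrite skew_step_subset //=; apply: B_max; exact: connect_trans SB (connect1 BB').
Qed.

Lemma min_skew_forcingE m :
  (forall T, skew_forcing e T -> m <= #|T|) ->
  (exists2 T, skew_forcing e T & #|T| = m) ->
  forall S, min_skew_forcing e S = skew_forcing e S && (#|S| == m).
Proof.
move=> m_le [T0 T0_forcing T0_card] S; apply/andP/andP => [[S_forcing S_min]|].
  split=> //; rewrite eqn_leq m_le // andbT -T0_card.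
  exact: (implyP (forallP S_min T0)).
case=> S_forcing /eqP S_card; split=> //.
by apply/forallP=> T; apply/implyP => /m_le; rewrite S_card.
Qed.

Lemma connect_skew_step_subset B B' : connect (skew_step e) B B' -> B \subset B'.
Proof.
move=> BB'; apply: (connect_invariant (P := fun C : {set V} => B \subset C) _ BB') (subxx B).
by move=> C C' BC /skew_step_subset; apply: subset_trans.
Qed.

Lemma ZTEE (S1 S2 : MSF e) :
  ZTE e S1 S2 = (#|val S1 :\: val S2| == 1) && (#|val S2 :\: val S1| == 1).
Proof. exact: exists_setD_set1. Qed.

End SkewForcing.

Lemma val_iter_ordS n m (w : 'I_n) : val (iter m (@ordS n) w) = (w + m) %% n.
Proof.
elim: m => [|m IHm] /=; first by rewrite addn0 modn_small.
by rewrite IHm -addn1 modnDml addn1 addnS.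
Qed.

Lemma odd_ordS n (i : 'I_n) : ~~ odd n -> odd (ordS i) = ~~ odd i.
Proof. by move=> n_even; rewrite /= odd_mod ?(negbTE n_even). Qed.

Section Cycle.
Variable n : nat.
Hypothesis n_gt2 : 2 < n.
Implicit Types (u v w x : 'I_n) (B S : {set 'I_n}).

Let vertex0 : 'I_n := Ordinal (ltnW (ltnW n_gt2)).

Lemma cycle_relE u w : cycle_rel n u w = (w == ordS u) || (w == ord_pred u).
Proof.
change ((w == ordS u) || (u == ordS w) = (w == ordS u) || (w == ord_pred u)).
by rewrite [u == _]eq_sym (can2_eq (@ordSK n) (@ord_predK n)).
Qed.

Lemma ordS_neq_pred u : ordS u != ord_pred u.
Proof.
rewrite eq_sym (can2_eq (@ord_predK n) (@ordSK n)) -val_eqE (val_iter_ordS 2 u).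
have u_lt := ltn_ord u; rewrite /=; case: (ltnP (u + 2) n) => [lt | ge].
  by rewrite modn_small //; lia.
by rewrite -(subnK ge) modnDr modn_small; lia.
Qed.

Lemma cycle_rel_irr u : cycle_rel n u u = false.
Proof.
rewrite cycle_relE; apply/norP; split; apply: contra_neq (ordS_neq_pred u) => u_eq.
  by rewrite {2}u_eq ordSK.
by rewrite {1}u_eq ord_predK.
Qed.

Lemma skew_step_cycle B B' :
  skew_step (cycle_rel n) B B' ->
  exists2 w, w \in B &
    exists2 v, B' = v |: B & (v == ordS (ordS w)) || (w == ordS (ordS v)).
Proof.
case/existsP=> u /existsP [v /andP [/eqP white_nbr /eqP ->]].
have [v_nbr v_white] : cycle_rel n u v /\ v \notin B.
  by apply/andP; move: (set11 v); rewrite -white_nbr inE.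
have blue x : cycle_rel n u x -> x != v -> x \in B.
  by move=> ux; apply: contraNT => xB; rewrite -in_set1 -white_nbr inE ux.
have := ordS_neq_pred u; rewrite cycle_relE in v_nbr.
case/orP: v_nbr => /eqP v_eq; subst v => nbr_neq.
- exists (ord_pred u); first by apply: blue; rewrite ?cycle_relE ?eqxx ?orbT // eq_sym.
  by exists (ordS u); rewrite ?ord_predK ?eqxx.
- exists (ordS u); first by apply: blue; rewrite ?cycle_relE ?eqxx.
  by exists (ord_pred u); rewrite ?ord_predK ?eqxx ?orbT.
Qed.

Lemma skew_step_ordS2 B w :
  w \in B -> ordS (ordS w) \notin B ->
  skew_step (cycle_rel n) B (ordS (ordS w) |: B).
Proof.
move=> wB w2B; apply/existsP; exists (ordS w); apply/existsP; exists (ordS (ordS w)).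
rewrite eqxx andbT; apply/eqP/setP=> x; rewrite !inE cycle_relE ordSK.
by case: eqP => [->|_]; [rewrite w2B | case: eqP => // ->; rewrite wB].
Qed.

Lemma ordS2_orbit w x :
  odd n || (odd x == odd w) -> exists m, x = iter m.*2 (@ordS n) w.
Proof.
have := ltn_ord w; have := ltn_ord x.
case: (boolP (odd n)) => [n_odd | n_even] /= x_lt w_lt.
  (* [n.+1./2] is the inverse of 2 modulo the odd [n]. *)
  exists ((x + n - w) * n.+1./2); apply/val_inj; rewrite val_iter_ordS -muln2 -mulnA.
  rewrite muln2 halfK /= n_odd subn0.
  have -> : w + (x + n - w) * n.+1 = x + (x + n - w).+1 * n by rewrite mulnS mulSn; lia.
  by rewrite addnC modnMDl modn_small.
move=> /eqP same_parity; exists (x + n - w)./2; apply/val_inj.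
rewrite val_iter_ordS halfK oddB ?oddD ?(negbTE n_even) ?addbF ?same_parity ?addbb ?subn0;
  last by lia.
have -> : w + (x + n - w) = x + n by lia.
by rewrite modnDr modn_small.
Qed.

Lemma skew_forcing_cycle_cover S :
  (forall x, exists2 w, w \in S & odd n || (odd x == odd w)) ->
  skew_forcing (cycle_rel n) S.
Proof.
move=> S_reach; have [B SB B_stable] := skew_step_stable (cycle_rel n) S.
have B_closed w : w \in B -> ordS (ordS w) \in B.
  move=> wB; apply: contraT => w2B; have := setU11 (ordS (ordS w)) B.
  by rewrite (B_stable _ (skew_step_ordS2 wB w2B)) (negbTE w2B).
rewrite /skew_forcing (_ : [set: 'I_n] = B) //; apply/setP=> x; rewrite inE; symmetry.
have [w /(subsetP (connect_skew_step_subset SB)) wB /ordS2_orbit [m ->]] := S_reach x.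
by elim: m => [|m IHm] //; rewrite doubleS; apply: B_closed.
Qed.

Lemma skew_forcing_cycle_meet (Q : pred 'I_n) S x :
  (forall w, Q (ordS (ordS w)) = Q w) ->
  skew_forcing (cycle_rel n) S -> Q x -> exists2 y, y \in S & Q y.
Proof.
move=> Q_inv S_forcing Qx; case: (boolP [exists y in S, Q y]) => [/exists_inP //|].
rewrite negb_exists_in => S_notQ.
have notQ_inv B B' : [forall y in B, ~~ Q y] -> skew_step (cycle_rel n) B B' ->
    [forall y in B', ~~ Q y].
  move=> /forall_inP B_notQ /skew_step_cycle [w wB [v -> vw]].
  apply/forall_inP => y /setU1P [->|/B_notQ //].
  by case/orP: vw => /eqP vw; move: (B_notQ w wB); rewrite vw Q_inv.
have /forall_inP /(_ x (in_setT x)) := connect_invariant notQ_inv S_forcing S_notQ.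
by rewrite Qx.
Qed.

Lemma min_skew_forcing_cycle_odd S :
  odd n -> min_skew_forcing (cycle_rel n) S = (#|S| == 1).
Proof.
move=> n_odd; have forcingE T : skew_forcing (cycle_rel n) T = (T != set0).
  apply/idP/set0Pn => [T_forcing | [w wT]].
    have [y yT _] :=
      skew_forcing_cycle_meet (Q := predT) (x := vertex0) (fun=> erefl) T_forcing isT.
    by exists y.
  by apply: skew_forcing_cycle_cover => x; exists w; rewrite ?n_odd.
rewrite (@min_skew_forcingE _ _ 1) ?forcingE.
- by rewrite -card_gt0; case: #|S| => [|[]].
- by move=> T; rewrite forcingE card_gt0.
- by exists [set vertex0]; rewrite ?forcingE ?cards1 // -card_gt0 cards1.
Qed.

Lemma cycle_rel_odd x y : ~~ odd n -> cycle_rel n x y -> odd y = ~~ odd x.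
Proof.
move=> n_even; rewrite cycle_relE => /orP [] /eqP ->; rewrite ?odd_ordS //.
by rewrite -{2}[x]ord_predK odd_ordS ?negbK.
Qed.

Lemma skew_forcing_cycle_even S :
  ~~ odd n ->
  skew_forcing (cycle_rel n) S = [exists x in S, odd x] && [exists x in S, ~~ odd x].
Proof.
move=> n_even.
apply/idP/andP => [S_forcing | [/exists_inP [a aS a_odd] /exists_inP [b bS b_even]]].
  split; apply/exists_inP.
    apply: (skew_forcing_cycle_meet (Q := odd) (x := ordS vertex0) _ S_forcing).
      by move=> w; rewrite !odd_ordS ?negbK.
    by rewrite odd_ordS.
  apply: (skew_forcing_cycle_meet (Q := fun w => ~~ odd w) (x := vertex0) _ S_forcing) => //.
  by move=> w; rewrite !odd_ordS ?negbK.
apply: skew_forcing_cycle_cover => x; rewrite (negbTE n_even) /=.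
by case: (odd x); [exists a | exists b]; rewrite ?a_odd ?(negbTE b_even).
Qed.
End Cycle.

Section EvenCycle.
Variable k : nat.
Hypothesis k_gt1 : 1 < k.
Implicit Types (i j : 'I_k) (x : 'I_k.*2) (p q : 'I_k * 'I_k) (S : {set 'I_k.*2}).

Fact even_vertex_subproof (i : 'I_k) : i.*2 < k.*2.
Proof. by rewrite ltn_double. Qed.

Fact odd_vertex_subproof (i : 'I_k) : i.*2.+1 < k.*2.
Proof. by rewrite -doubleS leq_double. Qed.

Definition even_vertex (i : 'I_k) : 'I_k.*2 := Ordinal (even_vertex_subproof i).
Definition odd_vertex (i : 'I_k) : 'I_k.*2 := Ordinal (odd_vertex_subproof i).

Definition pair_set (p : 'I_k * 'I_k) : {set 'I_k.*2} :=
  [set even_vertex p.1; odd_vertex p.2].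

Lemma odd_even_vertex i : odd (even_vertex i) = false.
Proof. exact: odd_double. Qed.

Lemma odd_odd_vertex i : odd (odd_vertex i).
Proof. by rewrite /= odd_double. Qed.

Lemma even_vertex_inj : injective even_vertex.
Proof. by move=> i j [] /double_inj /val_inj. Qed.

Lemma odd_vertex_inj : injective odd_vertex.
Proof. by move=> i j [] /double_inj /val_inj. Qed.

Lemma even_odd_vertex_eq i j : (even_vertex i == odd_vertex j) = false.
Proof.
apply/negbTE/eqP => /(congr1 (fun v : 'I_k.*2 => odd v)).
by rewrite odd_even_vertex odd_odd_vertex.
Qed.

Lemma even_vertexP x : ~~ odd x -> exists i, x = even_vertex i.
Proof.
have x_half : x./2 < k by rewrite ltn_half_double.
move=> x_even; exists (Ordinal x_half); apply/val_inj.
by rewrite /= halfK (negbTE x_even) subn0.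
Qed.

Lemma odd_vertexP x : odd x -> exists i, x = odd_vertex i.
Proof.
have x_half : x./2 < k by rewrite ltn_half_double.
move=> x_odd; exists (Ordinal x_half); apply/val_inj.
by rewrite /= -{1}(odd_double_half x) x_odd.
Qed.

Lemma card_pair_setD p q :
  #|pair_set p :\: pair_set q| = (p.1 != q.1) + (p.2 != q.2).
Proof.
rewrite card_set2D ?even_odd_vertex_eq // !inE !(inj_eq even_vertex_inj).
rewrite !(inj_eq odd_vertex_inj) even_odd_vertex_eq.
by rewrite [odd_vertex _ == _]eq_sym even_odd_vertex_eq !orbF.
Qed.

Lemma in_pair_setD p q x :
  (x \in pair_set p :\: pair_set q) =
  (x == even_vertex p.1) && (p.1 != q.1) || (x == odd_vertex p.2) && (p.2 != q.2).
Proof.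
rewrite !inE; case: (eqVneq x (even_vertex p.1)) => [->|_].
  by rewrite (inj_eq even_vertex_inj) !even_odd_vertex_eq /= !orbF andbT.
case: (eqVneq x (odd_vertex p.2)) => [->|_]; rewrite ?andbF //.
by rewrite (inj_eq odd_vertex_inj) ![odd_vertex _ == _]eq_sym !even_odd_vertex_eq andbT.
Qed.

Lemma pair_set_inj : injective pair_set.
Proof.
move=> [i j] [i' j'] eq_pq; have := card_pair_setD (i, j) (i', j').
rewrite eq_pq setDv cards0 => /esym/eqP.
by rewrite addn_eq0 !eqb0 !negbK /= => /andP [/eqP -> /eqP ->].
Qed.

Lemma pair_set_exchange_odd p q x y :
  pair_set p :\: pair_set q = [set x] -> pair_set q :\: pair_set p = [set y] ->
  odd x = odd y.
Proof.
move=> Dx Dy; have := set11 x; have := set11 y; rewrite -Dx -Dy !in_pair_setD.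
have := card_pair_setD p q; rewrite Dx cards1.
case: (eqVneq p.1 q.1) => [-> | _] /=.
  by rewrite !andbF /= => _ /andP [/eqP -> _] /andP [/eqP -> _]; rewrite !odd_odd_vertex.
case: (eqVneq p.2 q.2) => [-> _ | _ //].
by rewrite !andbF !orbF !andbT => /eqP -> /eqP ->; rewrite !odd_even_vertex.
Qed.

Lemma min_skew_forcing_pair_setP S :
  reflect (exists p, S = pair_set p) (min_skew_forcing (cycle_rel k.*2) S).
Proof.
have n_gt2 : 2 < k.*2 by rewrite -[2]/(1.*2) ltn_double.
have forcingE := skew_forcing_cycle_even n_gt2 _ (negbT (odd_double k)).
have pair_forcing p : skew_forcing (cycle_rel k.*2) (pair_set p).
  rewrite forcingE; apply/andP; split; apply/exists_inP;
    [exists (odd_vertex p.2) | exists (even_vertex p.1)];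
    by rewrite ?inE ?eqxx ?orbT ?odd_odd_vertex ?odd_even_vertex.
have card_pair_set p : #|pair_set p| = 2 by rewrite cards2 even_odd_vertex_eq.
rewrite (@min_skew_forcingE _ _ 2); first last.
- have i0 : 'I_k := Ordinal (ltnW k_gt1).
  by exists (pair_set (i0, i0)).
- move=> T; rewrite forcingE => /andP [/exists_inP [a aT a_odd] /exists_inP [b bT b_even]].
  have ab : a != b by apply: contraTneq a_odd => ->.
  apply: leq_trans (subset_leq_card (_ : [set a; b] \subset T)); first by rewrite cards2 ab.
  by apply/subsetP => x; rewrite !inE => /orP [] /eqP ->.
apply: (iffP andP) => [[S_forcing /eqP S_card] | [p ->]].
  move: S_forcing; rewrite forcingE; case/andP.
  move=> /exists_inP [a aS /odd_vertexP [j a_eq]] /exists_inP [b bS /even_vertexP [i b_eq]].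
  exists (i, j); apply/eqP; rewrite eq_sym eqEcard card_pair_set S_card leqnn andbT.
  by apply/subsetP => x; rewrite !inE => /orP [] /eqP ->; rewrite -?a_eq -?b_eq.
by rewrite pair_forcing card_pair_set.
Qed.

End EvenCycle.

Section OddCycleReconfiguration.
Variable n : nat.
Hypotheses (n_gt2 : 2 < n) (n_odd : odd n).

Let set1_min (i : 'I_n) : min_skew_forcing (cycle_rel n) [set i].
Proof. by rewrite min_skew_forcing_cycle_odd ?cards1. Qed.

Let set1_msf (i : 'I_n) : MSF (cycle_rel n) := exist _ [set i] (set1_min i).

Let set1_msf_bij : bijective set1_msf.
Proof.
apply: inj_onto_bij => [i j /(congr1 val) /set1_inj // | [S S_min]].
have /cards1P [i S_eq] : #|S| == 1 by rewrite -min_skew_forcing_cycle_odd.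
by apply/codomP; exists i; apply: val_inj.
Qed.

Lemma ZTE_cycle_odd : isomorphic (ZTE (cycle_rel n)) (complete_rel n).
Proof.
apply: (isomorphic_of_bij set1_msf_bij) => i j.
rewrite ZTEE /= !set1D !inE [j == i]eq_sym /complete_rel.
by case: (eqVneq i j); rewrite ?cards0 ?cards1.
Qed.

Lemma ZTS_cycle_odd : isomorphic (ZTS (cycle_rel n)) (cycle_rel n).
Proof.
apply: (isomorphic_of_bij set1_msf_bij) => i j; rewrite /ZTS /=.
apply/existsP/idP => [[v1 /existsP [v2 /and3P [/eqP D1 /eqP D2]]] | ij].
  have := set11 v1; have := set11 v2; rewrite -D1 -D2 !inE.
  by move=> /andP [_ /eqP ->] /andP [_ /eqP ->].
have /negbTE ij' : i != j by apply: contraTneq ij => ->; rewrite cycle_rel_irr.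
exists i; apply/existsP; exists j.
by rewrite !set1D !inE [j == i]eq_sym ij' !eqxx ij.
Qed.
End OddCycleReconfiguration.

Section EvenCycleReconfiguration.
Variable k : nat.
Hypothesis k_gt1 : 1 < k.

Let pair_set_min p : min_skew_forcing (cycle_rel k.*2) (pair_set p).
Proof. by apply/(min_skew_forcing_pair_setP k_gt1); exists p. Qed.

Let pair_msf p : MSF (cycle_rel k.*2) := exist _ (pair_set p) (pair_set_min p).

Let pair_msf_bij : bijective pair_msf.
Proof.
apply: inj_onto_bij => [p q /(congr1 val) /pair_set_inj // | [S S_min]].
have /(min_skew_forcing_pair_setP k_gt1) [p S_eq] := S_min.
by apply/codomP; exists p; apply: val_inj.
Qed.

Lemma ZTE_cycle_even :
  isomorphic (ZTE (cycle_rel k.*2)) (cart_rel (complete_rel k) (complete_rel k)).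
Proof.
apply: (isomorphic_of_bij pair_msf_bij) => p q.
rewrite ZTEE /= !card_pair_setD /cart_rel /complete_rel.
rewrite [q.1 == _]eq_sym [q.2 == _]eq_sym.
by case: (p.1 == q.1); case: (p.2 == q.2).
Qed.

Lemma ZTS_cycle_even : isomorphic (ZTS (cycle_rel k.*2)) (edgeless_rel (k * k)).
Proof.
apply: isomorphic_edgeless; last by rewrite -(bij_eq_card pair_msf_bij) card_prod card_ord.
case: pair_msf_bij => msf_pair _ pair_msfK S1 S2; rewrite -(pair_msfK S1) -(pair_msfK S2).
move: (msf_pair S1) (msf_pair S2) => p q; apply/negbTE/existsP => [[x /existsP [y]]].
case/and3P=> /eqP Dx /eqP Dy /(cycle_rel_odd (negbT (odd_double k))).
by rewrite -(pair_set_exchange_odd Dx Dy); case: (odd x).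
Qed.
End EvenCycleReconfiguration.

Theorem theorem5p8 (n : nat) (hn : 3 <= n) :
  (odd n ->
     isomorphic (ZTE (cycle_rel n)) (complete_rel n) /\
     isomorphic (ZTS (cycle_rel n)) (cycle_rel n)) /\
  (~~ odd n ->
     isomorphic (ZTE (cycle_rel n))
                (cart_rel (complete_rel n./2) (complete_rel n./2)) /\
     isomorphic (ZTS (cycle_rel n)) (edgeless_rel (n ^ 2 %/ 4))).
Proof.
split=> [n_odd | n_even]; first by split; [exact: ZTE_cycle_odd | exact: ZTS_cycle_odd].
have [k n_eq] : exists k, n = k.*2.
  by exists n./2; rewrite -[LHS]odd_double_half (negbTE n_even).
have k_gt1 : 1 < k by lia.
rewrite n_eq doubleK (_ : k.*2 ^ 2 %/ 4 = k * k) //.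
  by split; [exact: ZTE_cycle_even | exact: ZTS_cycle_even].
by rewrite -mul2n expnMn mulKn ?mulnn.
Qed.
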